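(* Let $X$ be a complete CAT(1) space with $\mathrm{Diam}(X)<\pi/2$ and $T\colon X\to X$ a firmly vicinal mapping. Then for each $x\in X$, $\{T^nx\}$ is $\Delta$-convergent to an element of $\mathrm{Fix}(T)$.
   Context: A CAT(1) space is a $\pi$-geodesic metric space in which every geodesic triangle of perimeter $<2\pi$ satisfies the CAT(1) comparison inequality relative to comparison triangles in the unit sphere $\mathbb S^2$. $\{x_n\}$ is $\Delta$-convergent to $p$ if for every subsequence $\{x_{n_i}\}$, $p$ is the unique point $z$ minimizing $\limsup_i d(x_{n_i},z)$. With $C_z=\cos d(Tz,z)$, $T$ is firmly vicinal if for all $x,y\in X$: $\bigl(C_x^2(1+C_y^2)C_y+C_y^2(1+C_x^2)C_x\bigr)\cos d(Tx,Ty)\ge C_x^2(1+C_y^2)\cos d(Tx,y)+C_y^2(1+C_x^2)\cos d(Ty,x)$. *)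

From Stdlib Require Import Reals Lra.
Open Scope R_scope.

Section Defs.
Context {X : Type} (d : X -> X -> R).

Definition is_metric : Prop :=
  (forall x y, 0 <= d x y) /\
  (forall x y, d x y = 0 <-> x = y) /\
  (forall x y, d x y = d y x) /\
  (forall x y z, d x z <= d x y + d y z).

Definition geodesic (x y : X) (g : R -> X) : Prop :=
  g 0 = x /\ g (d x y) = y /\
  forall s t, 0 <= s <= d x y -> 0 <= t <= d x y -> d (g s) (g t) = Rabs (s - t).

Definition pi_geodesic : Prop :=
  forall x y, d x y < PI -> exists g, geodesic x y g.

End Defs.

Definition R3 : Type := (R * R * R)%type.
Definition dot3 (a b : R3) : R :=
  let '(a1, a2, a3) := a in let '(b1, b2, b3) := b in a1 * b1 + a2 * b2 + a3 * b3.
Definition on_S2 (a : R3) : Prop := dot3 a a = 1.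
Definition dS2 (a b : R3) : R := acos (dot3 a b).

Section CAT1.
Context {X : Type} (d : X -> X -> R).

(** [u] lies on the side (a,b) of a triangle, parametrised by the geodesic g,
    and [ub] is its comparison point on the side (ab,bb) of the comparison
    triangle in S^2. *)
Definition side_point (a b : X) (g : R -> X) (ab bb : R3) (u : X) (ub : R3) : Prop :=
  exists t, 0 <= t <= d a b /\ u = g t /\ on_S2 ub /\
    dS2 ab ub = t /\ dS2 ub bb = d a b - t.

Definition tri_point (p q r : X) (gpq gqr grp : R -> X) (pb qb rb : R3)
  (u : X) (ub : R3) : Prop :=
  side_point p q gpq pb qb u ub \/ side_point q r gqr qb rb u ub \/
  side_point r p grp rb pb u ub.

Definition CAT1_inequality : Prop :=
  forall (p q r : X) (gpq gqr grp : R -> X),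
    geodesic d p q gpq -> geodesic d q r gqr -> geodesic d r p grp ->
    d p q + d q r + d r p < 2 * PI ->
    forall pb qb rb : R3,
      on_S2 pb -> on_S2 qb -> on_S2 rb ->
      dS2 pb qb = d p q -> dS2 qb rb = d q r -> dS2 rb pb = d r p ->
      forall u v ub vb,
        tri_point p q r gpq gqr grp pb qb rb u ub ->
        tri_point p q r gpq gqr grp pb qb rb v vb ->
        d u v <= dS2 ub vb.

Definition CAT1_space : Prop := is_metric d /\ pi_geodesic d /\ CAT1_inequality.

Definition cauchy (x : nat -> X) : Prop :=
  forall eps, 0 < eps -> exists N, forall m n, (N <= m)%nat -> (N <= n)%nat ->
    d (x m) (x n) < eps.
Definition converges_to (x : nat -> X) (p : X) : Prop :=
  forall eps, 0 < eps -> exists N, forall n, (N <= n)%nat -> d (x n) p < eps.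
Definition complete : Prop :=
  forall x : nat -> X, cauchy x -> exists p, converges_to x p.

Definition diam_lt (c : R) : Prop :=
  exists c', c' < c /\ forall x y, d x y <= c'.

Definition is_limsup (a : nat -> R) (L : R) : Prop :=
  forall eps, 0 < eps ->
    (exists N, forall n, (N <= n)%nat -> a n < L + eps) /\
    (forall N, exists n, (N <= n)%nat /\ L - eps < a n).

Definition subseq_index (phi : nat -> nat) : Prop :=
  forall n, (phi n < phi (S n))%nat.

Definition unique_asymptotic_center (y : nat -> X) (p : X) : Prop :=
  exists Lp, is_limsup (fun n => d (y n) p) Lp /\
    forall z, z <> p -> forall Lz, is_limsup (fun n => d (y n) z) Lz -> Lp < Lz.

Definition Delta_convergent (x : nat -> X) (p : X) : Prop :=
  forall phi, subseq_index phi -> unique_asymptotic_center (fun i => x (phi i)) p.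

Definition firmly_vicinal (T : X -> X) : Prop :=
  forall x y : X,
    let Cx := cos (d (T x) x) in
    let Cy := cos (d (T y) y) in
    (Cx ^ 2 * (1 + Cy ^ 2) * Cy + Cy ^ 2 * (1 + Cx ^ 2) * Cx) * cos (d (T x) (T y))
    >= Cx ^ 2 * (1 + Cy ^ 2) * cos (d (T x) y) + Cy ^ 2 * (1 + Cx ^ 2) * cos (d (T y) x).

End CAT1.

From Stdlib Require Import Reals Lra Lia Psatz Classical IndefiniteDescription.
Open Scope R_scope.

(* Work with [cos d] instead of [d]: since Diam(X) < PI/2, minimising
   [z |-> limsup d(x_n, z)] is maximising [z |-> liminf cos d(x_n, z)]. The CAT(1)
   comparison with a spherical triangle bounds the cosine-liminf at the midpoint of
   [z1 z2] below by [(l1 + l2) / (2 cos (d z1 z2 / 2))], so a maximising sequence is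
   Cauchy and its limit is the unique asymptotic centre, for any sequence.
   Firm vicinality makes the deficit of [cos d(x_n, T z)] below that of
   [cos d(x_n, z)] contract geometrically, so the centre of the orbit is a fixed
   point [p]. Then [cos d(x_n, p)] increases, which forces [d(x_n, x_(n+1)) -> 0];
   with this, the centre of any subsequence is also fixed, and comparing the
   monotone limits of [cos d(x_n, .)] at both fixed points shows the two centres
   coincide. *)

Definition liminf_ge (a : nat -> R) (M : R) : Prop :=
  forall e, 0 < e -> exists N, forall n, (N <= n)%nat -> M - e < a n.

Definition is_liminf (a : nat -> R) (L : R) : Prop := is_lub (liminf_ge a) L.

Lemma is_liminf_ge a L : is_liminf a L -> liminf_ge a L.
Proof.
  intros [Hub Hleast] e he.
  assert (exists M, liminf_ge a M /\ L - e / 2 < M) as [M [HM HLM]].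
  { apply NNPP. intros Hno. enough (L <= L - e / 2) by lra.
    apply Hleast. intros M HM. apply Rnot_lt_le. intros Hlt. apply Hno. eauto. }
  destruct (HM (e / 2)) as [N HN]; [lra|].
  exists N. intros n Hn. specialize (HN n Hn). lra.
Qed.

Lemma is_liminf_max a L M : is_liminf a L -> liminf_ge a M -> M <= L.
Proof. intros [Hub _] HM. now apply Hub. Qed.

Lemma is_liminf_unique a L1 L2 : is_liminf a L1 -> is_liminf a L2 -> L1 = L2.
Proof.
  intros H1 H2. apply Rle_antisym.
  - apply (is_liminf_max a L2); [exact H2 | now apply is_liminf_ge].
  - apply (is_liminf_max a L1); [exact H1 | now apply is_liminf_ge].
Qed.

Lemma liminf_ge_const a lo : (forall n, lo <= a n) -> liminf_ge a lo.
Proof. intros Ha e he. exists O. intros n _. specialize (Ha n). lra. Qed.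

Lemma liminf_ge_le_upper a M hi : (forall n, a n <= hi) -> liminf_ge a M -> M <= hi.
Proof.
  intros Ha HM. apply Rnot_lt_le. intros Hlt.
  destruct (HM (M - hi)) as [N HN]; [lra|]. specialize (HN N (le_n N)). specialize (Ha N). lra.
Qed.

Lemma is_liminf_ex a lo hi : (forall n, lo <= a n <= hi) ->
  exists L, is_liminf a L /\ lo <= L <= hi.
Proof.
  intros Ha.
  assert (Hlo : liminf_ge a lo) by (apply liminf_ge_const; intros n; apply Ha).
  assert (Hhi : forall M, liminf_ge a M -> M <= hi)
    by (intros M; apply liminf_ge_le_upper; intros n; apply Ha).
  destruct (completeness (liminf_ge a)) as [L HL]; [exists hi; exact Hhi | exists lo; exact Hlo|].
  exists L. split; [exact HL | split].
  - now apply (is_liminf_max a L lo).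
  - apply (proj2 HL). exact Hhi.
Qed.

Lemma is_liminf_frequently a L : is_liminf a L ->
  forall e, 0 < e -> forall N, exists n, (N <= n)%nat /\ a n < L + e.
Proof.
  intros HL e he N. apply NNPP. intros Hno.
  enough (L + e <= L) by lra.
  apply (is_liminf_max a L (L + e) HL). intros e' he'. exists N. intros n Hn.
  apply Rnot_le_lt. intros Hle. apply Hno. exists n. split; [exact Hn | lra].
Qed.

Lemma liminf_ge_approx a b M :
  (forall eps, 0 < eps -> exists N, forall n, (N <= n)%nat -> a n - eps < b n) ->
  liminf_ge a M -> liminf_ge b M.
Proof.
  intros Hab HM e he.
  destruct (HM (e / 2)) as [N1 HN1]; [lra|]. destruct (Hab (e / 2)) as [N2 HN2]; [lra|].
  exists (Nat.max N1 N2). intros n Hn.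
  specialize (HN1 n ltac:(lia)). specialize (HN2 n ltac:(lia)). lra.
Qed.

Lemma liminf_ge_le a b M : (forall n, a n <= b n) -> liminf_ge a M -> liminf_ge b M.
Proof.
  intros Hab. apply liminf_ge_approx. intros eps heps. exists O. intros n _.
  specialize (Hab n). lra.
Qed.

Lemma liminf_ge_of_lt a M : (forall e, 0 < e -> liminf_ge a (M - e)) -> liminf_ge a M.
Proof.
  intros H e he. destruct (H (e / 2) ltac:(lra) (e / 2)) as [N HN]; [lra|].
  exists N. intros n Hn. specialize (HN n Hn). lra.
Qed.

Lemma liminf_ge_plus a b Ma Mb :
  liminf_ge a Ma -> liminf_ge b Mb -> liminf_ge (fun n => a n + b n) (Ma + Mb).
Proof.
  intros Ha Hb e he.
  destruct (Ha (e / 2)) as [Na HNa]; [lra|]. destruct (Hb (e / 2)) as [Nb HNb]; [lra|].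
  exists (Nat.max Na Nb). intros n Hn.
  specialize (HNa n ltac:(lia)). specialize (HNb n ltac:(lia)). lra.
Qed.

Lemma liminf_ge_scale a r M : 0 < r -> liminf_ge a M -> liminf_ge (fun n => r * a n) (r * M).
Proof.
  intros hr HM e he. destruct (HM (e / r)) as [N HN]; [now apply Rdiv_lt_0_compat|].
  exists N. intros n Hn. specialize (HN n Hn).
  apply (Rmult_lt_compat_l r) in HN; [|exact hr].
  replace (r * (M - e / r)) with (r * M - e) in HN by (field; lra). exact HN.
Qed.

Lemma liminf_ge_of_contracting_deficit a M rho N : 0 <= rho < 1 ->
  (forall n, (N <= n)%nat -> M - a (S n) <= rho * Rmax (M - a n) 0) -> liminf_ge a M.
Proof.
  intros hrho Hstep.
  set (W := Rmax (M - a N) 0). assert (hW : 0 <= W) by apply Rmax_r.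
  assert (Hdecay : forall j, M - a (N + j)%nat <= rho ^ j * W).
  { induction j as [|j IH].
    - rewrite Nat.add_0_r, pow_O, Rmult_1_l. apply Rmax_l.
    - rewrite Nat.add_succ_r.
      assert (Rmax (M - a (N + j)%nat) 0 <= rho ^ j * W)
        by (apply Rmax_lub; [exact IH | apply Rmult_le_pos; [apply pow_le|]; lra]).
      specialize (Hstep (N + j)%nat ltac:(lia)). simpl. nra. }
  intros e he.
  destruct (pow_lt_1_zero rho ltac:(rewrite Rabs_right; lra) (e / (W + 1))) as [J HJ].
  { apply Rdiv_lt_0_compat; lra. }
  exists (N + J)%nat. intros n Hn.
  specialize (HJ (n - N)%nat ltac:(lia)). specialize (Hdecay (n - N)%nat).
  replace (N + (n - N))%nat with n in Hdecay by lia.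
  rewrite Rabs_right in HJ by (apply Rle_ge, pow_le; lra).
  apply (Rmult_lt_compat_r (W + 1)) in HJ; [|lra].
  replace (e / (W + 1) * (W + 1)) with e in HJ by (field; lra).
  pose proof (pow_le rho (n - N) ltac:(lra)). nra.
Qed.

Lemma is_liminf_of_Un_cv a l phi : Un_cv a l -> (forall i, (i <= phi i)%nat) ->
  is_liminf (fun i => a (phi i)) l.
Proof.
  intros Hcv Hphi. split.
  - intros M HM. apply Rnot_lt_le. intros Hlt.
    destruct (HM ((M - l) / 2)) as [N1 HN1]; [lra|].
    destruct (Hcv ((M - l) / 2)) as [N2 HN2]; [lra|].
    specialize (HN1 (Nat.max N1 N2) ltac:(lia)).
    specialize (HN2 (phi (Nat.max N1 N2)) ltac:(specialize (Hphi (Nat.max N1 N2)); lia)).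
    unfold Rdist in HN2. apply Rabs_def2 in HN2. lra.
  - intros b Hb. apply Hb. intros e he. destruct (Hcv e he) as [N HN].
    exists N. intros i Hi. specialize (HN (phi i) ltac:(specialize (Hphi i); lia)).
    unfold Rdist in HN. apply Rabs_def2 in HN. lra.
Qed.

Lemma is_limsup_unique a L1 L2 : is_limsup a L1 -> is_limsup a L2 -> L1 = L2.
Proof.
  assert (Hlt : forall L L', is_limsup a L -> is_limsup a L' -> ~ L < L').
  { intros L L' H H' Hlt.
    destruct (H ((L' - L) / 2) ltac:(lra)) as [[N HN] _].
    destruct (H' ((L' - L) / 2) ltac:(lra)) as [_ Hfreq].
    destruct (Hfreq N) as [n [Hn Hn']]. specialize (HN n Hn). lra. }
  intros H1 H2. destruct (Rtotal_order L1 L2) as [h | [h | h]].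
  - exfalso. exact (Hlt L1 L2 H1 H2 h).
  - exact h.
  - exfalso. exact (Hlt L2 L1 H2 H1 h).
Qed.

Lemma cos_lipschitz a b : Rabs (cos a - cos b) <= Rabs (a - b).
Proof.
  assert (Hlt : forall x y, x < y -> Rabs (cos y - cos x) <= Rabs (y - x)).
  { intros x y hxy.
    destruct (MVT_cor2 cos (fun t => - sin t) x y hxy) as [t [Ht _]].
    { intros t _. apply derivable_pt_lim_cos. }
    rewrite Ht, Rabs_mult, Rabs_Ropp.
    assert (Rabs (sin t) <= 1) by (apply Rabs_le; apply SIN_bound).
    pose proof (Rabs_pos (y - x)). nra. }
  destruct (Rtotal_order a b) as [h | [-> | h]].
  - rewrite Rabs_minus_sym, (Rabs_minus_sym a). now apply Hlt.
  - rewrite !Rminus_diag, Rabs_R0. lra.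
  - now apply Hlt.
Qed.

Lemma cos_lt_1 x : 0 < x <= PI -> cos x < 1.
Proof. intros hx. rewrite <- cos_0. apply cos_decreasing_1; lra. Qed.

Lemma is_limsup_acos a c l : c < PI / 2 -> (forall n, 0 <= a n <= c) ->
  is_liminf (fun n => cos (a n)) l -> 0 <= l <= 1 -> is_limsup a (acos l).
Proof.
  intros hc Ha Hl hl. pose proof PI2_1.
  set (L := acos l). pose proof (acos_bound l) as HL. fold L in HL.
  assert (HcosL : cos L = l) by (apply cos_acos; lra).
  assert (HL2 : L <= PI / 2).
  { apply (cos_decr_0 (PI / 2) L); try lra. rewrite cos_PI2. lra. }
  intros e he. split.
  - set (e' := Rmin e (PI / 2)).
    assert (he' : 0 < e' <= e) by (split; [apply Rmin_glb_lt; lra | apply Rmin_l]).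
    assert (he2 : e' <= PI / 2) by apply Rmin_r.
    assert (cos (L + e') < l) by (rewrite <- HcosL; apply cos_decreasing_1; lra).
    destruct (is_liminf_ge _ _ Hl (l - cos (L + e'))) as [N HN]; [lra|].
    exists N. intros n Hn. specialize (HN n Hn). specialize (Ha n).
    enough (a n < L + e') by lra.
    apply cos_decreasing_0; lra.
  - intros N. destruct (Rlt_dec (L - e) 0) as [h | h].
    + exists N. split; [lia|]. specialize (Ha N). lra.
    + assert (l < cos (L - e)) by (rewrite <- HcosL; apply cos_decreasing_1; lra).
      destruct (is_liminf_frequently _ _ Hl (cos (L - e) - l) ltac:(lra) N) as [n [Hn Hn']].
      exists n. split; [exact Hn|]. specialize (Ha n).
      apply cos_decreasing_0; lra.
Qed.

Lemma dot3_bound a b : on_S2 a -> on_S2 b -> -1 <= dot3 a b <= 1.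
Proof.
  destruct a as [[a1 a2] a3], b as [[b1 b2] b3]. unfold on_S2, dot3. cbn. intros Ha Hb.
  pose proof (pow2_ge_0 (a1 - b1)). pose proof (pow2_ge_0 (a2 - b2)).
  pose proof (pow2_ge_0 (a3 - b3)). pose proof (pow2_ge_0 (a1 + b1)).
  pose proof (pow2_ge_0 (a2 + b2)). pose proof (pow2_ge_0 (a3 + b3)).
  split; nra.
Qed.

Lemma dS2_of_cos a b t : 0 <= t <= PI -> dot3 a b = cos t -> dS2 a b = t.
Proof. intros ht Hab. unfold dS2. rewrite Hab. now apply acos_cos. Qed.

(* The second coordinate of [r] is forced by the two dot products; the triangle
   inequalities are exactly what makes the remaining third coordinate real. *)
Lemma S2_third_vertex de be ga :
  0 < de < PI -> 0 <= be -> be + de <= PI ->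
  be - de <= ga -> de - be <= ga -> ga <= be + de ->
  exists r, on_S2 r /\ dot3 (1, 0, 0) r = cos be /\ dot3 (cos de, sin de, 0) r = cos ga.
Proof.
  intros hde hbe hsum h1 h2 h3.
  assert (hsd : 0 < sin de) by (apply sin_gt_0; lra).
  assert (hsb : 0 <= sin be) by (apply sin_ge_0; lra).
  pose proof (sin2_cos2 de) as Pde. pose proof (sin2_cos2 be) as Pbe. unfold Rsqr in Pde, Pbe.
  assert (Hup : cos ga <= cos de * cos be + sin de * sin be).
  { destruct (Rle_dec be de).
    - rewrite <- cos_minus. apply cos_decr_1; lra.
    - replace (cos de * cos be + sin de * sin be) with (cos (be - de))
        by (rewrite cos_minus; ring). apply cos_decr_1; lra. }
  assert (Hlo : cos de * cos be - sin de * sin be <= cos ga)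
    by (rewrite <- cos_plus; apply cos_decr_1; lra).
  set (w := (cos ga - cos de * cos be) / sin de).
  assert (Hw : sin de * w = cos ga - cos de * cos be) by (unfold w; field; lra).
  assert (Hw2 : w * w <= sin be * sin be).
  { assert (- sin be <= w <= sin be).
    { split; apply (Rmult_le_reg_l (sin de)); nra. }
    nra. }
  set (h := sqrt (1 - cos be * cos be - w * w)).
  assert (Hh : h * h = 1 - cos be * cos be - w * w) by (apply sqrt_sqrt; nra).
  exists (cos be, w, h). unfold on_S2, dot3. split; [nra | split; [ring | nra]].
Qed.

(* [m] is the midpoint of [p q], i.e. [(p + q) / (2 cos (de / 2))], whence the value
   of [dot3 m r]. *)
Lemma S2_comparison_midpoint de be ga :
  0 < de <= PI / 2 -> 0 <= be <= PI / 2 -> 0 <= ga <= PI / 2 ->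
  be - de <= ga -> de - be <= ga -> ga <= be + de ->
  exists p q r m, on_S2 p /\ on_S2 q /\ on_S2 r /\ on_S2 m /\
    dS2 p q = de /\ dS2 q r = ga /\ dS2 r p = be /\
    dS2 p m = de / 2 /\ dS2 m q = de - de / 2 /\
    dot3 m r = (cos be + cos ga) / (2 * cos (de / 2)).
Proof.
  intros hde hbe hga h1 h2 h3. pose proof PI2_1.
  destruct (S2_third_vertex de be ga) as [r [Sr [Hpr Hqr]]]; try lra.
  assert (hC : 0 < cos (de / 2)) by (apply cos_gt_0; lra).
  assert (Hcos : cos de = 2 * cos (de / 2) * cos (de / 2) - 1)
    by (rewrite <- cos_2a_cos; f_equal; field).
  assert (Hsin : sin de = 2 * sin (de / 2) * cos (de / 2))
    by (rewrite <- sin_2a; f_equal; field).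
  pose proof (sin2_cos2 de) as Pde. pose proof (sin2_cos2 (de / 2)) as Pm.
  unfold Rsqr in Pde, Pm.
  exists (1, 0, 0), (cos de, sin de, 0), r, (cos (de / 2), sin (de / 2), 0).
  destruct r as [[r1 r2] r3]. unfold on_S2, dot3 in *.
  repeat split; try (unfold on_S2, dot3; nra).
  - apply dS2_of_cos; [lra | unfold dot3; ring].
  - apply dS2_of_cos; [lra | exact Hqr].
  - apply dS2_of_cos; [lra | unfold dot3; lra].
  - apply dS2_of_cos; [lra | unfold dot3; ring].
  - apply dS2_of_cos; [lra | unfold dot3].
    replace (de - de / 2) with (de / 2) by field. rewrite Hcos, Hsin. nra.
  - unfold dot3. rewrite <- Hpr, <- Hqr, Hcos, Hsin. field. lra.
Qed.

Definition vicinal_weight (a b : R) : R := a ^ 2 * (1 + b ^ 2).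

Lemma vicinal_weight_bounds k a b : 0 <= k -> k <= a <= 1 -> k <= b <= 1 ->
  k ^ 2 <= vicinal_weight a b <= 2.
Proof.
  intros hk ha hb. unfold vicinal_weight.
  assert (k ^ 2 <= a ^ 2 <= 1) by (split; simpl; nra).
  assert (0 <= b ^ 2 <= 1) by (split; simpl; nra).
  split; nra.
Qed.

Lemma weighted_deficit_contracts kappa A B u u' v' M :
  0 < kappa <= A -> 0 <= B <= 2 -> (A + B) * u' >= A * v' + B * u -> M < v' ->
  M - u' <= 2 / (kappa + 2) * Rmax (M - u) 0.
Proof.
  intros hA hB H Hv.
  set (W := Rmax (M - u) 0). assert (M - u <= W) by apply Rmax_l.
  assert (0 <= W) by apply Rmax_r.
  assert (0 <= A * (v' - M)) by (apply Rmult_le_pos; lra).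
  assert (B * (M - u) <= B * W) by (apply Rmult_le_compat_l; lra).
  assert (Hdef : (A + B) * (M - u') <= B * W) by lra.
  apply (Rmult_le_reg_l ((A + B) * (kappa + 2))); [nra|].
  replace ((A + B) * (kappa + 2) * (2 / (kappa + 2) * W)) with (2 * (A + B) * W)
    by (field; lra).
  assert (kappa * B <= 2 * A) by nra.
  assert ((kappa + 2) * ((A + B) * (M - u')) <= (kappa + 2) * (B * W))
    by (apply Rmult_le_compat_l; lra).
  assert (kappa * B * W <= 2 * A * W) by (apply Rmult_le_compat_r; lra).
  nra.
Qed.

Lemma weighted_deficit_perturbed kappa A B u u' v' e :
  0 < kappa <= A -> 0 <= B <= 2 -> 0 <= e -> u' - e <= u ->
  (A + B) * u' >= A * v' + B * u -> v' - 2 / kappa * e <= u'.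
Proof.
  intros hA hB he Hu H.
  assert (Hd : A * (v' - u') <= B * e) by nra.
  assert (B * e <= 2 / kappa * e * A).
  { apply (Rmult_le_reg_l kappa); [lra|].
    replace (kappa * (2 / kappa * e * A)) with (2 * A * e) by (field; lra).
    assert (kappa * B <= 2 * A) by nra.
    replace (kappa * (B * e)) with (kappa * B * e) by ring.
    apply Rmult_le_compat_r; lra. }
  apply (Rmult_le_reg_l A); nra.
Qed.

Section Cat1Geometry.

Context {X : Type} {d : X -> X -> R} {c : R}.
Hypothesis metric : is_metric d.
Hypothesis geodesic_space : pi_geodesic d.
Hypothesis cat1 : CAT1_inequality d.
Hypothesis diam_le : forall x y, d x y <= c.
Hypothesis diam_range : 0 <= c < PI / 2.

Lemma dist_nonneg x y : 0 <= d x y.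
Proof. exact (proj1 metric x y). Qed.

Lemma dist_eq0 x y : d x y = 0 <-> x = y.
Proof. exact (proj1 (proj2 metric) x y). Qed.

Lemma dist_sym x y : d x y = d y x.
Proof. exact (proj1 (proj2 (proj2 metric)) x y). Qed.

Lemma dist_triangle x y z : d x z <= d x y + d y z.
Proof. exact (proj2 (proj2 (proj2 metric)) x y z). Qed.

Lemma dist_lt_half_pi x y : 0 <= d x y < PI / 2.
Proof. split; [apply dist_nonneg | apply (Rle_lt_trans _ c); [apply diam_le | lra]]. Qed.

Lemma cos_diam_pos : 0 < cos c.
Proof. pose proof PI2_1. apply cos_gt_0; lra. Qed.

Lemma cos_dist_bounds x y : cos c <= cos (d x y) <= 1.
Proof.
  pose proof PI2_1. pose proof (dist_lt_half_pi x y).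
  split; [apply cos_decr_1; try lra; apply diam_le | apply COS_bound].
Qed.

Lemma cos_dist_midpoint z1 z2 :
  exists w, forall y, cos (d y z1) + cos (d y z2) <= 2 * cos (d z1 z2 / 2) * cos (d y w).
Proof.
  pose proof PI2_1.
  destruct (Req_dec (d z1 z2) 0) as [H0 | Hne].
  { exists z1. intros y. apply dist_eq0 in H0. subst z2.
    rewrite (proj2 (dist_eq0 z1 z1) eq_refl). replace (0 / 2) with 0 by field.
    rewrite cos_0. lra. }
  pose proof (dist_lt_half_pi z1 z2) as Hde.
  assert (Hde0 : 0 < d z1 z2)
    by (destruct (proj1 Hde) as [h | h]; [exact h | now contradiction Hne]).
  destruct (geodesic_space z1 z2) as [g Hg]; [lra|].
  exists (g (d z1 z2 / 2)). intros y.
  pose proof (dist_lt_half_pi y z1) as Hbe. pose proof (dist_lt_half_pi z2 y) as Hga.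
  destruct (geodesic_space z2 y) as [g2 Hg2]; [lra|].
  destruct (geodesic_space y z1) as [g3 Hg3]; [lra|].
  pose proof (dist_triangle y z2 z1) as T1. pose proof (dist_triangle z1 y z2) as T2.
  pose proof (dist_triangle z2 z1 y) as T3.
  rewrite (dist_sym y z2), (dist_sym z2 z1) in T1. rewrite (dist_sym z1 y), (dist_sym y z2) in T2.
  rewrite (dist_sym z2 z1), (dist_sym z1 y) in T3.
  destruct (S2_comparison_midpoint (d z1 z2) (d y z1) (d z2 y))
    as [p [q [r [m [Sp [Sq [Sr [Sm [Dpq [Dqr [Drp [Dpm [Dmq Hmr]]]]]]]]]]]]]; try lra.
  assert (Hcat : d (g (d z1 z2 / 2)) y <= dS2 m r).
  { apply (cat1 z1 z2 y g g2 g3 Hg Hg2 Hg3) with (pb := p) (qb := q) (rb := r);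
      try assumption; [lra | left | right; left].
    - exists (d z1 z2 / 2). repeat split; try lra; assumption.
    - exists (d z2 y). repeat split; try lra; try assumption.
      + symmetry. apply Hg2.
      + unfold dS2. rewrite Sr, acos_1. ring. }
  pose proof (dot3_bound m r Sm Sr).
  assert (Hcos : dot3 m r <= cos (d (g (d z1 z2 / 2)) y)).
  { rewrite <- (cos_acos (dot3 m r)) by lra.
    pose proof (acos_bound (dot3 m r)). pose proof (dist_lt_half_pi (g (d z1 z2 / 2)) y).
    unfold dS2 in Hcat. apply cos_decr_1; lra. }
  assert (hC : 0 < cos (d z1 z2 / 2)) by (apply cos_gt_0; lra).
  rewrite Hmr in Hcos. rewrite (dist_sym y z2), (dist_sym y (g _)).
  apply (Rmult_le_compat_l (2 * cos (d z1 z2 / 2))) in Hcos; [|lra].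
  replace (2 * cos (d z1 z2 / 2) * ((cos (d y z1) + cos (d z2 y)) / (2 * cos (d z1 z2 / 2))))
    with (cos (d y z1) + cos (d z2 y)) in Hcos by (field; lra).
  exact Hcos.
Qed.

Definition cos_dist (y : nat -> X) (z : X) : nat -> R := fun n => cos (d (y n) z).

Definition cos_center (y : nat -> X) (q : X) : Prop :=
  exists lq, is_liminf (cos_dist y q) lq /\
    forall z lz, z <> q -> is_liminf (cos_dist y z) lz -> lz < lq.

Lemma is_liminf_cos_dist_ex y z : exists l, is_liminf (cos_dist y z) l.
Proof.
  destruct (is_liminf_ex (cos_dist y z) (cos c) 1) as [l [Hl _]]; [|now exists l].
  intros n. apply cos_dist_bounds.
Qed.

Lemma is_liminf_cos_dist_bounds y z l : is_liminf (cos_dist y z) l -> cos c <= l <= 1.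
Proof.
  intros Hl. split.
  - apply (is_liminf_max _ _ _ Hl). apply liminf_ge_const. intros n. apply cos_dist_bounds.
  - apply (liminf_ge_le_upper (cos_dist y z)); [intros n; apply cos_dist_bounds|].
    now apply is_liminf_ge.
Qed.

Lemma liminf_ge_cos_dist_move y z q l :
  liminf_ge (cos_dist y z) l -> liminf_ge (cos_dist y q) (l - d z q).
Proof.
  intros Hl. apply (liminf_ge_le (fun n => cos_dist y z n + - d z q)).
  - intros n. unfold cos_dist.
    pose proof (cos_lipschitz (d (y n) z) (d (y n) q)).
    pose proof (dist_triangle (y n) z q). pose proof (dist_triangle (y n) q z).
    rewrite (dist_sym q z) in *.
    assert (Rabs (d (y n) z - d (y n) q) <= d z q) by (apply Rabs_le; lra).
    pose proof (Rle_abs (cos (d (y n) z) - cos (d (y n) q))). lra.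
  - replace (l - d z q) with (l + - d z q) by ring.
    apply liminf_ge_plus; [exact Hl | apply liminf_ge_const; intros; lra].
Qed.

Lemma cos_liminf_midpoint_bound y S :
  (forall z l, is_liminf (cos_dist y z) l -> l <= S) ->
  forall z1 z2 l1 l2, is_liminf (cos_dist y z1) l1 -> is_liminf (cos_dist y z2) l2 ->
  l1 + l2 <= 2 * cos (d z1 z2 / 2) * S.
Proof.
  intros HS z1 z2 l1 l2 H1 H2. pose proof PI2_1.
  destruct (cos_dist_midpoint z1 z2) as [w Hw].
  set (C := cos (d z1 z2 / 2)) in *.
  assert (hC : 0 < C) by (pose proof (dist_lt_half_pi z1 z2); apply cos_gt_0; lra).
  assert (Hlw : liminf_ge (cos_dist y w) (/ (2 * C) * (l1 + l2))).
  { apply (liminf_ge_le (fun n => / (2 * C) * (cos_dist y z1 n + cos_dist y z2 n))).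
    - intros n. specialize (Hw (y n)). unfold cos_dist.
      apply (Rmult_le_reg_l (2 * C)); [lra|].
      rewrite <- Rmult_assoc, Rinv_r, Rmult_1_l; lra.
    - apply liminf_ge_scale; [apply Rinv_0_lt_compat; lra|].
      apply liminf_ge_plus; now apply is_liminf_ge. }
  destruct (is_liminf_cos_dist_ex y w) as [lw Hlw'].
  pose proof (is_liminf_max _ _ _ Hlw' Hlw). pose proof (HS w lw Hlw').
  replace (l1 + l2) with (2 * C * (/ (2 * C) * (l1 + l2))) by (field; lra).
  apply Rmult_le_compat_l; lra.
Qed.

Lemma cos_liminf_maximizing_cauchy y S zs ls :
  (forall z l, is_liminf (cos_dist y z) l -> l <= S) ->
  (forall m, is_liminf (cos_dist y (zs m)) (ls m)) ->
  (forall eta, 0 < eta -> exists N, forall m, (N <= m)%nat -> S - eta < ls m) ->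
  cauchy d zs.
Proof.
  intros HS Hls Hmax e he. pose proof PI2_1. pose proof cos_diam_pos.
  assert (HSk : cos c <= S)
    by (pose proof (HS _ _ (Hls O)); pose proof (is_liminf_cos_dist_bounds _ _ _ (Hls O)); lra).
  set (e' := Rmin e 1).
  assert (he' : 0 < e' <= e) by (split; [apply Rmin_glb_lt; lra | apply Rmin_l]).
  assert (he1 : e' <= 1) by apply Rmin_r.
  assert (Hce : cos (e' / 2) < 1) by (apply cos_lt_1; lra).
  destruct (Hmax (cos c * (1 - cos (e' / 2)))) as [N HN]; [apply Rmult_lt_0_compat; lra|].
  exists N. intros m n Hm Hn.
  pose proof (cos_liminf_midpoint_bound y S HS _ _ _ _ (Hls m) (Hls n)) as Hmid.
  pose proof (HN m Hm). pose proof (HN n Hn).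
  pose proof (dist_lt_half_pi (zs m) (zs n)).
  set (C := cos (d (zs m) (zs n) / 2)) in *.
  assert (cos c * (1 - cos (e' / 2)) <= S * (1 - cos (e' / 2)))
    by (apply Rmult_le_compat_r; lra).
  assert (S * cos (e' / 2) < S * C) by lra.
  assert (HC : cos (e' / 2) < C) by (apply (Rmult_lt_reg_l S); lra).
  enough (d (zs m) (zs n) / 2 < e' / 2) by lra.
  apply cos_decreasing_0; fold C; lra.
Qed.

Lemma cos_liminf_maximizing_limit y S zs ls q lq :
  (forall m, is_liminf (cos_dist y (zs m)) (ls m)) ->
  (forall eta, 0 < eta -> exists N, forall m, (N <= m)%nat -> S - eta < ls m) ->
  converges_to d zs q -> is_liminf (cos_dist y q) lq -> S <= lq.
Proof.
  intros Hls Hmax Hq Hlq. apply Rnot_lt_le. intros Hlt.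
  destruct (Hmax ((S - lq) / 2)) as [N1 HN1]; [lra|].
  destruct (Hq ((S - lq) / 2)) as [N2 HN2]; [lra|].
  specialize (HN1 (Nat.max N1 N2) ltac:(lia)). specialize (HN2 (Nat.max N1 N2) ltac:(lia)).
  pose proof (is_liminf_max _ _ _ Hlq
    (liminf_ge_cos_dist_move y _ q _ (is_liminf_ge _ _ (Hls (Nat.max N1 N2))))).
  lra.
Qed.

Lemma cos_liminf_maximizing_sequence y S :
  is_lub (fun s => exists z, is_liminf (cos_dist y z) s) S ->
  exists zs ls, (forall m, is_liminf (cos_dist y (zs m)) (ls m)) /\
    (forall eta, 0 < eta -> exists N, forall m, (N <= m)%nat -> S - eta < ls m).
Proof.
  intros [_ HSleast].
  assert (Happrox : forall m, exists zl : X * R,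
    is_liminf (cos_dist y (fst zl)) (snd zl) /\ S - (1 / 2) ^ m < snd zl).
  { intros m. apply NNPP. intros Hno.
    enough (S <= S - (1 / 2) ^ m) by (pose proof (pow_lt (1 / 2) m ltac:(lra)); lra).
    apply HSleast. intros s [z Hz]. apply Rnot_lt_le. intros Hlt. apply Hno.
    now exists (z, s). }
  destruct (functional_choice _ Happrox) as [zl Hzl].
  exists (fun m => fst (zl m)), (fun m => snd (zl m)). split; [intros m; apply Hzl|].
  intros eta heta.
  destruct (pow_lt_1_zero (1 / 2) ltac:(rewrite Rabs_right; lra) eta heta) as [N HN].
  exists N. intros m Hm. specialize (HN m Hm).
  rewrite Rabs_right in HN by (apply Rle_ge, pow_le; lra).
  pose proof (proj2 (Hzl m)). lra.
Qed.

Lemma cos_liminf_maximizer_strict y S q lq :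
  (forall z l, is_liminf (cos_dist y z) l -> l <= S) ->
  is_liminf (cos_dist y q) lq -> S <= lq ->
  forall z lz, z <> q -> is_liminf (cos_dist y z) lz -> lz < lq.
Proof.
  intros HS Hlq HSq z lz Hzq Hlz. apply Rnot_le_lt. intros Hle. pose proof PI2_1.
  pose proof (cos_liminf_midpoint_bound y S HS _ _ _ _ Hlz Hlq).
  pose proof (HS q lq Hlq). pose proof (is_liminf_cos_dist_bounds _ _ _ Hlq).
  pose proof cos_diam_pos. pose proof (dist_lt_half_pi z q) as Hzq'.
  assert (0 < d z q)
    by (destruct (proj1 Hzq') as [h | h]; [exact h | now apply eq_sym, dist_eq0 in h]).
  assert (cos (d z q / 2) < 1) by (apply cos_lt_1; lra).
  nra.
Qed.

Lemma cos_center_exists (complete_space : complete d) y : exists q, cos_center y q.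
Proof.
  destruct (completeness (fun s => exists z, is_liminf (cos_dist y z) s)) as [S HS].
  - exists 1. intros s [z Hz]. apply (is_liminf_cos_dist_bounds _ _ _ Hz).
  - destruct (is_liminf_cos_dist_ex y (y O)) as [l Hl]. exists l, (y O). exact Hl.
  - assert (HSub : forall z l, is_liminf (cos_dist y z) l -> l <= S)
      by (intros z l Hl; apply (proj1 HS); exists z; exact Hl).
    destruct (cos_liminf_maximizing_sequence y S HS) as [zs [ls [Hls Hmax]]].
    destruct (complete_space _ (cos_liminf_maximizing_cauchy y S _ _ HSub Hls Hmax))
      as [q Hq].
    destruct (is_liminf_cos_dist_ex y q) as [lq Hlq].
    exists q, lq. split; [exact Hlq|].
    apply (cos_liminf_maximizer_strict y S q lq HSub Hlq).
    exact (cos_liminf_maximizing_limit y S _ _ q lq Hls Hmax Hq Hlq).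
Qed.

Lemma cos_center_fixed (T : X -> X) y q : cos_center y q ->
  (forall M, liminf_ge (cos_dist y q) M -> liminf_ge (cos_dist y (T q)) M) -> T q = q.
Proof.
  intros [lq [Hlq Hmax]] HT. apply NNPP. intros HTq.
  destruct (is_liminf_cos_dist_ex y (T q)) as [lT HlT].
  pose proof (is_liminf_max _ _ _ HlT (HT lq (is_liminf_ge _ _ Hlq))).
  pose proof (Hmax (T q) lT HTq HlT). lra.
Qed.

Lemma cos_center_asymptotic_center y q : cos_center y q -> unique_asymptotic_center d y q.
Proof.
  intros [lq [Hlq Hmax]]. pose proof cos_diam_pos.
  assert (Hlimsup : forall z l, is_liminf (cos_dist y z) l ->
    is_limsup (fun n => d (y n) z) (acos l)).
  { intros z l Hl. pose proof (is_liminf_cos_dist_bounds _ _ _ Hl).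
    apply (is_limsup_acos _ c); [lra | | exact Hl | lra].
    intros n. split; [apply dist_nonneg | apply diam_le]. }
  exists (acos lq). split; [exact (Hlimsup q lq Hlq)|].
  intros z Hz Lz HLz.
  destruct (is_liminf_cos_dist_ex y z) as [lz Hlz].
  rewrite (is_limsup_unique _ _ _ HLz (Hlimsup z lz Hlz)).
  pose proof (Hmax z lz Hz Hlz).
  pose proof (is_liminf_cos_dist_bounds _ _ _ Hlz). pose proof (is_liminf_cos_dist_bounds _ _ _ Hlq).
  pose proof (acos_bound lz). pose proof (acos_bound lq).
  apply Rnot_le_lt. intros Hle.
  pose proof (cos_decr_1 (acos lz) (acos lq) ltac:(lra) ltac:(lra) ltac:(lra) ltac:(lra) Hle).
  rewrite !cos_acos in * by lra. lra.
Qed.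

Definition orbit (T : X -> X) (x : X) (n : nat) : X := Nat.iter n T x.

Lemma vicinal_weight_cos_bounds x y z w :
  cos c ^ 2 <= vicinal_weight (cos (d x y)) (cos (d z w)) <= 2.
Proof.
  pose proof cos_diam_pos. apply vicinal_weight_bounds; [lra | apply cos_dist_bounds | apply cos_dist_bounds].
Qed.

Section FirmlyVicinal.

Variable T : X -> X.
Hypothesis vicinal : firmly_vicinal d T.

Lemma firmly_vicinal_weighted x z :
  (vicinal_weight (cos (d (T x) x)) (cos (d (T z) z)) +
   vicinal_weight (cos (d (T z) z)) (cos (d (T x) x))) * cos (d (T x) (T z)) >=
  vicinal_weight (cos (d (T x) x)) (cos (d (T z) z)) * cos (d (T x) z) +
  vicinal_weight (cos (d (T z) z)) (cos (d (T x) x)) * cos (d x (T z)).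
Proof.
  pose proof (vicinal x z) as H. cbv zeta in H. rewrite (dist_sym (T z) x) in H.
  pose proof cos_diam_pos.
  pose proof (cos_dist_bounds (T x) x). pose proof (cos_dist_bounds (T z) z).
  pose proof (cos_dist_bounds (T x) (T z)).
  unfold vicinal_weight in *.
  set (a := cos (d (T x) x)) in *. set (b := cos (d (T z) z)) in *.
  set (u := cos (d (T x) (T z))) in *.
  pose proof (pow2_ge_0 a). pose proof (pow2_ge_0 b).
  assert (0 <= (a ^ 2 * (1 + b ^ 2) * (1 - b) + b ^ 2 * (1 + a ^ 2) * (1 - a)) * u).
  { apply Rmult_le_pos; [|lra].
    apply Rplus_le_le_0_compat; apply Rmult_le_pos; try apply Rmult_le_pos; lra. }
  nra.
Qed.

Variable x0 : X.
Local Notation xs := (orbit T x0).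

Lemma liminf_ge_orbit_image z M :
  liminf_ge (cos_dist xs z) M -> liminf_ge (cos_dist xs (T z)) M.
Proof.
  intros HM. apply liminf_ge_of_lt. intros e he. destruct (HM e he) as [N HN].
  pose proof cos_diam_pos. assert (hk2 : 0 < cos c ^ 2) by (apply pow_lt; lra).
  apply (liminf_ge_of_contracting_deficit _ _ (2 / (cos c ^ 2 + 2)) N).
  { split; [apply Rlt_le, Rdiv_lt_0_compat; lra|].
    apply (Rmult_lt_reg_r (cos c ^ 2 + 2)); [lra|].
    unfold Rdiv. rewrite Rmult_assoc, Rinv_l; lra. }
  intros n Hn. eapply weighted_deficit_contracts.
  3: exact (firmly_vicinal_weighted (xs n) z).
  3: apply (HN (S n)); lia.
  - pose proof (vicinal_weight_cos_bounds (T (xs n)) (xs n) (T z) z). lra.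
  - pose proof (vicinal_weight_cos_bounds (T z) z (T (xs n)) (xs n)). lra.
Qed.

Lemma fixed_point_cos_dist_le p : T p = p ->
  forall z, cos (d z p) <= cos (d (T z) z) * cos (d (T z) p).
Proof.
  intros Hp z. pose proof (vicinal z p) as H. cbv zeta in H.
  rewrite Hp, (proj2 (dist_eq0 p p) eq_refl), cos_0, (dist_sym p z) in H.
  set (a := cos (d (T z) z)) in *.
  assert (0 < 1 + a ^ 2) by (pose proof (pow2_ge_0 a); lra).
  apply (Rmult_le_reg_l (1 + a ^ 2)); nra.
Qed.

Lemma orbit_cos_dist_fixed_growing p : T p = p -> Un_growing (cos_dist xs p).
Proof.
  intros Hp n. pose proof (fixed_point_cos_dist_le p Hp (xs n)) as H.
  change (T (xs n)) with (xs (S n)) in H.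
  pose proof (cos_dist_bounds (xs (S n)) (xs n)). pose proof (cos_dist_bounds (xs (S n)) p).
  pose proof cos_diam_pos. unfold cos_dist. nra.
Qed.

Lemma orbit_cos_dist_fixed_cv p : T p = p -> exists s, Un_cv (cos_dist xs p) s.
Proof.
  intros Hp. destruct (growing_cv _ (orbit_cos_dist_fixed_growing p Hp)) as [s Hs].
  - exists 1. intros v [n ->]. apply cos_dist_bounds.
  - now exists s.
Qed.

Lemma orbit_asymptotically_regular p : T p = p ->
  forall eps, 0 < eps -> exists N, forall n, (N <= n)%nat -> d (xs n) (xs (S n)) < eps.
Proof.
  intros Hp eps heps. pose proof PI2_1. pose proof cos_diam_pos.
  destruct (orbit_cos_dist_fixed_cv p Hp) as [s Hs].
  pose proof (growing_ineq _ _ (orbit_cos_dist_fixed_growing p Hp) Hs) as Hle.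
  assert (hs : cos c <= s) by (pose proof (Hle O); pose proof (cos_dist_bounds (xs O) p);
    unfold cos_dist in *; lra).
  set (e' := Rmin eps 1).
  assert (he' : 0 < e' <= eps) by (split; [apply Rmin_glb_lt; lra | apply Rmin_l]).
  assert (he1 : e' <= 1) by apply Rmin_r.
  assert (Hce : cos e' < 1) by (apply cos_lt_1; lra).
  destruct (Hs (s * (1 - cos e'))) as [N HN]; [apply Rmult_lt_0_compat; lra|].
  exists N. intros n Hn. specialize (HN n Hn). unfold Rdist in HN. apply Rabs_def2 in HN.
  pose proof (fixed_point_cos_dist_le p Hp (xs n)) as Hfix.
  change (T (xs n)) with (xs (S n)) in Hfix.
  specialize (Hle (S n)). unfold cos_dist in HN, Hle.
  pose proof (cos_dist_bounds (xs (S n)) (xs n)) as Ha.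
  set (a := cos (d (xs (S n)) (xs n))) in *.
  assert (a * cos (d (xs (S n)) p) <= a * s) by (apply Rmult_le_compat_l; lra).
  assert (s * cos e' < s * a) by lra.
  assert (Hca : cos e' < a) by (apply (Rmult_lt_reg_l s); lra).
  pose proof (dist_lt_half_pi (xs (S n)) (xs n)).
  rewrite dist_sym. enough (d (xs (S n)) (xs n) < e') by lra.
  apply cos_decreasing_0; fold a; lra.
Qed.

Lemma orbit_cos_dist_image_ge q n :
  cos (d (xs (S n)) q) - 2 / cos c ^ 2 * d (xs n) (xs (S n)) <= cos (d (xs (S n)) (T q)).
Proof.
  pose proof cos_diam_pos. pose proof (firmly_vicinal_weighted (xs n) q) as Hw.
  change (T (xs n)) with (xs (S n)) in Hw.
  eapply weighted_deficit_perturbed with (kappa := cos c ^ 2).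
  5: exact Hw.
  - pose proof (vicinal_weight_cos_bounds (xs (S n)) (xs n) (T q) q).
    assert (0 < cos c ^ 2) by (apply pow_lt; lra). lra.
  - pose proof (vicinal_weight_cos_bounds (T q) q (xs (S n)) (xs n)).
    pose proof (pow2_ge_0 (cos c)). lra.
  - apply dist_nonneg.
  - pose proof (cos_lipschitz (d (xs (S n)) (T q)) (d (xs n) (T q))).
    pose proof (dist_triangle (xs (S n)) (xs n) (T q)).
    pose proof (dist_triangle (xs n) (xs (S n)) (T q)).
    rewrite (dist_sym (xs (S n)) (xs n)) in *.
    assert (Rabs (d (xs (S n)) (T q) - d (xs n) (T q)) <= d (xs n) (xs (S n)))
      by (apply Rabs_le; lra).
    pose proof (Rle_abs (cos (d (xs (S n)) (T q)) - cos (d (xs n) (T q)))). lra.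
Qed.

Lemma liminf_ge_subseq_image p phi q M : T p = p -> (forall i, (i <= phi i)%nat) ->
  liminf_ge (cos_dist (fun i => xs (phi i)) q) M ->
  liminf_ge (cos_dist (fun i => xs (phi i)) (T q)) M.
Proof.
  intros Hp Hphi. apply liminf_ge_approx. intros eps heps.
  pose proof cos_diam_pos. assert (hk2 : 0 < cos c ^ 2) by (apply pow_lt; lra).
  destruct (orbit_asymptotically_regular p Hp (cos c ^ 2 / 2 * eps)) as [N HN].
  { apply Rmult_lt_0_compat; [|lra]. apply Rdiv_lt_0_compat; lra. }
  exists (S N). intros i Hi. unfold cos_dist.
  pose proof (Hphi i). destruct (phi i) as [|m]; [lia|].
  pose proof (orbit_cos_dist_image_ge q m). specialize (HN m ltac:(lia)).
  assert (2 / cos c ^ 2 * d (xs m) (xs (S m)) < eps).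
  { apply (Rmult_lt_reg_l (cos c ^ 2 / 2)); [apply Rdiv_lt_0_compat; lra|].
    replace (cos c ^ 2 / 2 * (2 / cos c ^ 2 * d (xs m) (xs (S m))))
      with (d (xs m) (xs (S m))) by (field; lra).
    exact HN. }
  lra.
Qed.

Lemma orbit_center_fixed p : cos_center xs p -> T p = p.
Proof. intros Hp. apply (cos_center_fixed T xs p Hp), liminf_ge_orbit_image. Qed.

Lemma subseq_center_fixed p phi q : T p = p -> (forall i, (i <= phi i)%nat) ->
  cos_center (fun i => xs (phi i)) q -> T q = q.
Proof.
  intros Hp Hphi Hq. apply (cos_center_fixed T _ q Hq).
  intros M. exact (liminf_ge_subseq_image p phi q M Hp Hphi).
Qed.

(* Along the orbit, [cos d(x_n, p)] converges for every fixed point [p], so it has the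
   same liminf along the orbit and along any subsequence. *)
Lemma subseq_center_eq p phi q : T p = p -> T q = q -> (forall i, (i <= phi i)%nat) ->
  cos_center xs p -> cos_center (fun i => xs (phi i)) q -> q = p.
Proof.
  intros Hp Hq Hphi [lp [Hlp Hpmax]] [lq [Hlq Hqmax]].
  destruct (orbit_cos_dist_fixed_cv p Hp) as [sp Hsp].
  destruct (orbit_cos_dist_fixed_cv q Hq) as [sq Hsq].
  pose proof (is_liminf_of_Un_cv _ _ (fun i => i) Hsp (fun i => le_n i)) as Hp_full.
  pose proof (is_liminf_of_Un_cv _ _ (fun i => i) Hsq (fun i => le_n i)) as Hq_full.
  pose proof (is_liminf_of_Un_cv _ _ phi Hsp Hphi) as Hp_sub.
  pose proof (is_liminf_of_Un_cv _ _ phi Hsq Hphi) as Hq_sub.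
  rewrite (is_liminf_unique _ _ _ Hlp Hp_full) in Hpmax.
  rewrite (is_liminf_unique _ _ _ Hlq Hq_sub) in Hqmax.
  apply NNPP. intros Hqp.
  pose proof (Hpmax q sq Hqp Hq_full). pose proof (Hqmax p sp (not_eq_sym Hqp) Hp_sub). lra.
Qed.

End FirmlyVicinal.

End Cat1Geometry.

Lemma subseq_index_ge phi : subseq_index phi -> forall i, (i <= phi i)%nat.
Proof. intros Hphi i. induction i as [|i IH]; [lia | specialize (Hphi i); lia]. Qed.

Theorem corollary4p7 (X : Type) (d : X -> X -> R) (T : X -> X)
  (HX : CAT1_space d) (Hcomplete : complete d) (Hdiam : diam_lt d (PI / 2))
  (HT : firmly_vicinal d T) :
  forall x : X, exists p : X, T p = p /\ Delta_convergent d (fun n => Nat.iter n T x) p.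
Proof.
  intros x. destruct HX as [Hmetric [Hgeo Hcat]]. destruct Hdiam as [c [Hc Hd]].
  assert (Hrange : 0 <= c < PI / 2)
    by (pose proof (proj1 Hmetric x x); pose proof (Hd x x); split; lra).
  destruct (cos_center_exists Hmetric Hgeo Hcat Hd Hrange Hcomplete (orbit T x)) as [p Hp].
  pose proof (orbit_center_fixed Hmetric Hd Hrange T HT x p Hp) as Tp.
  exists p. split; [exact Tp|]. intros phi Hphi.
  pose proof (subseq_index_ge phi Hphi) as Hge.
  destruct (cos_center_exists Hmetric Hgeo Hcat Hd Hrange Hcomplete
    (fun i => orbit T x (phi i))) as [q Hq].
  pose proof (subseq_center_fixed Hmetric Hd Hrange T HT x p phi q Tp Hge Hq) as Tq.
  rewrite <- (subseq_center_eq Hmetric Hd Hrange T HT x p phi q Tp Tq Hge Hp Hq).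
  exact (cos_center_asymptotic_center Hmetric Hd Hrange _ q Hq).
Qed.
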